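(* For each $k=1,\dots,n-3$ there exists a unique polynomial $\tilde F_k\in\mathbb C[x_0,\dots,x_n,y_1,\dots,y_m]$ such that (1) $\tilde F_k$ is quasi-homogeneous of multi-degree $(b_{0k},\dots,b_{mk})$, where $x_j$ has multi-degree $(w_j,a_{1j},\dots,a_{mj})$ and $y_i$ has multi-degree the $i$-th standard unit vector $(0,\dots,1,\dots,0)$ of $\mathbb Z^{m+1}$ (indices $0,\dots,m$); and (2) $\tilde F_k(x_0,\dots,x_n,1,\dots,1)=F_k(x_0,\dots,x_n)$.
   Context: Let $w_0,\dots,w_n$ be positive integers ($\gcd=1$), $X=V(F_1,\dots,F_{n-3})\subset\mathbb P(\vec w)=[(\mathbb C^{n+1}\setminus0)/\mathbb C^*]$ ($x_i$ of weight $w_i$) a smooth complete intersection, $F_j$ general quasi-homogeneous of degree $b_j$ with $\sum b_j=\sum w_i$, $X$ not in any linear subspace. For $\alpha\in\mathbb Q\cap[0,1)$, $C_\alpha=\{i:\alpha w_i\in\mathbb Z\}$, $\mathbb P_\alpha=\{x_i=0,i\notin C_\alpha\}$, $X_\alpha=X\cap\mathbb P_\alpha$, age $\iota_\alpha=\sum_j\lfloor\alpha b_j\rfloor-\sum_i\lfloor\alpha w_i\rfloor$; for $\dim X_\alpha=0$, $\Lambda\subset C_\alpha$: $U_\Lambda=\{x_k=0\ (k\in\Lambda),x_k\ne0\ (k\in C_\alpha\setminus\Lambda)\}\subset\mathbb P_\alpha$, $\overline{U_\Lambda}=\{x_k=0,k\in\Lambda\}$. Let $\phi_1,\dots,\phi_m$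 be (i) $\mathbf 1_{X_\alpha}$ for $\alpha\ne0$, $\dim X_\alpha=1$, $\iota_\alpha=1$; (ii) for $\alpha\ne0$, $\dim X_\alpha=0$, $\iota_\alpha=1$, the classes $\mathbf 1_{\overline{U_\Lambda}\cap X_\alpha}$ for $\Lambda$ with $U_\Lambda\cap X_\alpha\ne\emptyset$; $\alpha_i$ is the sector of $\phi_i$. If $\phi_i$ is of type (i): $a_{ij}=\lfloor\alpha_iw_j\rfloor$ ($0\le j\le n$), $b_{ik}=\lfloor\alpha_ib_k\rfloor$ ($1\le k\le n-3$). If $\phi_i=\mathbf 1_{\overline{U_\Lambda}\cap X_{\alpha_i}}$ is of type (ii): $a_{ij}=\lfloor\alpha_iw_j\rfloor-\delta_\Lambda(j)$, $b_{ik}=\lfloor\alpha_ib_k\rfloor-\delta_\Gamma(k)$, with $\Gamma=\{k:\alpha_ib_k\in\mathbb Z,F_k\text{ identically zero on }U_\Lambda\}$ and $\delta$ indicator functions. Also $b_{0k}=b_k$. *)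

From HB Require Import structures.
From mathcomp Require Import all_boot all_order all_algebra.
From mathcomp Require Import mpoly complex.
From Stdlib Require Import ClassicalEpsilon.
Set Implicit Arguments. Unset Strict Implicit. Unset Printing Implicit Defensive.
Import Order.TTheory GRing.Theory Num.Theory.
Local Open Scope ring_scope.

(* Sector data of one class phi_i:
   - Sec1 alpha         : type (i), 1_{X_alpha}
   - Sec2 alpha Lambda  : type (ii), 1_{closure(U_Lambda) cap X_alpha}          *)
Inductive sector (n : nat) :=
  | Sec1 of rat
  | Sec2 of rat & {set 'I_n.+1}.

Definition sec_alpha n (s : sector n) : rat :=
  match s with Sec1 a => a | Sec2 a _ => a end.

Definition Cset n (w : 'I_n.+1 -> nat) (alpha : rat) : {set 'I_n.+1} :=
  [set i | (alpha * (w i)%:R) \is a Num.int].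

Definition age n (w : 'I_n.+1 -> nat) (b : 'I_(n - 3) -> nat) (alpha : rat) : int :=
  (\sum_k Num.floor (alpha * (b k)%:R)) - \sum_i Num.floor (alpha * (w i)%:R).

(* x lies in the affine cone over U_Lambda inside P_alpha, and x <> 0 *)
Definition in_U n (C : ringType) (w : 'I_n.+1 -> nat) (alpha : rat)
    (Lam : {set 'I_n.+1}) (x : 'I_n.+1 -> C) : Prop :=
  [/\ exists i, x i != 0,
      forall i, i \notin Cset w alpha -> x i = 0,
      forall i, i \in Lam -> x i = 0 &
      forall i, i \in Cset w alpha -> i \notin Lam -> x i != 0].

Definition zero_on_U n (C : ringType) (w : 'I_n.+1 -> nat) (alpha : rat)
    (Lam : {set 'I_n.+1}) (F : {mpoly C[n.+1]}) : Prop :=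
  forall x : 'I_n.+1 -> C, in_U w alpha Lam x -> F.@[x] = 0.

Definition in_Gamma n (C : ringType) (w : 'I_n.+1 -> nat) (b : 'I_(n - 3) -> nat)
    (F : 'I_(n - 3) -> {mpoly C[n.+1]}) (alpha : rat) (Lam : {set 'I_n.+1})
    (k : 'I_(n - 3)) : bool :=
  ((alpha * (b k)%:R) \is a Num.int) &&
  (if excluded_middle_informative (zero_on_U w alpha Lam (F k)) then true else false).

Definition acoef n (w : 'I_n.+1 -> nat) (s : sector n) (j : 'I_n.+1) : int :=
  match s with
  | Sec1 a => Num.floor (a * (w j)%:R)
  | Sec2 a Lam => Num.floor (a * (w j)%:R) - (j \in Lam)%:Z
  end.

Definition bcoef n (C : ringType) (w : 'I_n.+1 -> nat) (b : 'I_(n - 3) -> nat)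
    (F : 'I_(n - 3) -> {mpoly C[n.+1]}) (s : sector n) (k : 'I_(n - 3)) : int :=
  match s with
  | Sec1 a => Num.floor (a * (b k)%:R)
  | Sec2 a Lam => Num.floor (a * (b k)%:R) - (in_Gamma w b F a Lam k)%:Z
  end.

Definition qhomog n (C : ringType) (w : 'I_n.+1 -> nat) (d : nat) (F : {mpoly C[n.+1]}) :=
  forall mon, mon \in msupp F -> (\sum_j w j * mon j)%N = d.

(* variables x_j (j = 0..n) are 'X_(lshift m j), y_(i+1) (i < m) are 'X_(rshift n.+1 i) *)
Definition mqhomog n m (C : ringType) (w : 'I_n.+1 -> nat) (a : 'I_m -> 'I_n.+1 -> int)
    (d0 : int) (d : 'I_m -> int) (P : {mpoly C[n.+1 + m]}) : Prop :=
  forall mon, mon \in msupp P ->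
    (\sum_j (w j)%:Z * (mon (lshift m j))%:Z = d0) /\
    (forall i : 'I_m,
        \sum_j a i j * (mon (lshift m j))%:Z + (mon (rshift n.+1 i))%:Z = d i).

Definition set_y1 n m (C : ringType) : (n.+1 + m).-tuple {mpoly C[n.+1]} :=
  [tuple match split i with inl j => 'X_j | inr _ => 1 end | i < n.+1 + m].

From HB Require Import structures.
From mathcomp Require Import all_boot all_order all_algebra.
From mathcomp Require Import mpoly complex.
From mathcomp Require Import zify.
From Stdlib Require Import ClassicalEpsilon.
Import Order.TTheory GRing.Theory Num.Theory.
Local Open Scope ring_scope.

(* Setting y = 1 forgets the y-exponents, and the multi-degree condition
   determines them: a monomial x^mon of F_k must become x^mon y^e with
   e_i = b_{ik} - sum_j a_{ij} mon_j.  So the lift is unique, and it exists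
   once every such e_i is nonnegative.  As sum_j alpha w_j mon_j = alpha b_k,
   sum_j floor(alpha w_j) mon_j <= floor(alpha b_k), which settles type (i)
   and the case k \notin Gamma.  For k \in Gamma, equality together with
   mon_j = 0 on Lambda would make x^mon a monomial in the variables indexed
   by C_alpha \ Lambda only, and a polynomial vanishing on the torus U_Lambda
   has no such monomial. *)

Set Implicit Arguments.
Unset Strict Implicit.

Lemma mcoeff_sumX (R : nzRingType) N (r : seq 'X_{1..N}) (f : 'X_{1..N} -> R) k :
  uniq r -> (\sum_(m <- r) f m *: 'X_[m])@_k = if k \in r then f k else 0.
Proof.
elim: r => [|a r IHr] /=; first by rewrite big_nil mcoeff0.
case/andP=> anr ur; rewrite big_cons mcoeffD mcoeffZ mcoeffX IHr // in_cons.
have [->|nka] := eqVneq k a; first by rewrite (negbTE anr) mulr1 addr0.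
by rewrite mulr0 add0r.
Qed.

Section TorusVanishing.
Variables (K : numDomainType) (N : nat).
Implicit Types (p : {mpoly K[N]}) (x : 'I_N -> K).

Definition scale_at i (c : K) x : 'I_N -> K :=
  fun j => if j == i then c * x j else x j.

Definition mscale i (c : K) p : {mpoly K[N]} :=
  \sum_(m <- msupp p) (c ^+ m i * p@_m) *: 'X_[m].

Lemma mcoeff_mscale i c p m : (mscale i c p)@_m = c ^+ m i * p@_m.
Proof.
rewrite mcoeff_sumX ?msupp_uniq //.
by case: ifPn => // /memN_msupp_eq0 ->; rewrite mulr0.
Qed.

Lemma meval_mscale i c p x : (mscale i c p).@[x] = p.@[scale_at i c x].
Proof.
rewrite [RHS]mevalE raddf_sum; apply: eq_bigr => m _ /=.
rewrite mevalZ mevalX (bigD1 i) //= [X in _ = _ * X](bigD1 i) //= /scale_at eqxx.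
rewrite exprMn -!mulrA [RHS]mulrCA; do 3 congr (_ * _).
by apply: eq_bigr => j /negbTE ->.
Qed.

Lemma mpoly_eq0_on_torus p : (forall x, (forall j, x j != 0) -> p.@[x] = 0) -> p = 0.
Proof.
have [s] := ubnP (size (msupp p)); elim: s p => // s IHs p.
case E: (msupp p) => [|m1 [|m0 r]] sz p0; first exact: msuppnil0.
  have := p0 (fun=> 1) (fun=> oner_neq0 _).
  rewrite mevalE E big_seq1 big1 ?mulr1 => [p_m1|j _]; last exact: expr1n.
  by have := mem_head m1 [::]; rewrite -E mcoeff_msupp p_m1 eqxx.
have := msupp_uniq p; rewrite E /= inE negb_or => /andP[/andP[m10 _] _].
have [i m0i] : exists i, m0 i != m1 i.
  apply/existsP; apply: contraR m10 => /existsPn m01.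
  by apply/eqP/mnmP => i; apply/esym/eqP/negPn/m01.
pose two : K := 2%:R.
have two0 : two != 0 by rewrite pnatr_eq0.
pose q := mscale i two p - two ^+ m1 i *: p.
have mcoeff_q m : q@_m = (two ^+ m i - two ^+ m1 i) * p@_m.
  by rewrite mcoeffB mcoeff_mscale mcoeffZ mulrBl.
(* q has lost the monomial m1 but kept m0, and still vanishes on the torus. *)
have q0 : q = 0.
  apply: IHs.
    have sub : {subset msupp q <= m0 :: r}.
      move=> m; rewrite mcoeff_msupp mcoeff_q mulf_eq0 negb_or -mcoeff_msupp E inE.
      by case/andP=> /[swap] /orP[/eqP ->|//]; rewrite subrr eqxx.
    exact: leq_ltn_trans (uniq_leq_size (msupp_uniq q) sub) _.
  move=> x x0; rewrite mevalB mevalZ meval_mscale !p0 ?mulr0 ?subr0 // => j.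
  by rewrite /scale_at; case: ifP => _; rewrite ?mulf_neq0.
have := mcoeff_q m0; rewrite q0 mcoeff0 => /esym/eqP; rewrite mulf_eq0 subr_eq0.
rewrite /two -!natrX eqr_nat eqn_exp2l // (negbTE m0i) /= mcoeff_eq0 E.
by rewrite !inE eqxx orbT.
Qed.

Variable P : pred 'I_N.

Definition mrestrict p : {mpoly K[N]} :=
  \sum_(m <- msupp p | [forall j, ~~ P j ==> (m j == 0%N)]) p@_m *: 'X_[m].

Lemma meval_mrestrict p x : (mrestrict p).@[x] = p.@[fun j => if P j then x j else 0].
Proof.
rewrite [RHS]mevalE raddf_sum big_mkcond; apply: eq_bigr => m _ /=.
case: ifPn => [/forallP suppP | /forallPn[j]]; last first.
  rewrite negb_imply => /andP[Pj mj].
  by rewrite (bigD1 j) //= (negbTE Pj) expr0n (negbTE mj) mul0r mulr0.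
rewrite mevalZ mevalX; congr (_ * _); apply: eq_bigr => j _.
by case: ifPn => // /(implyP (suppP j)) /eqP ->; rewrite !expr0.
Qed.

Lemma mcoeff_mrestrict p (m : 'X_{1..N}) :
  (forall j, ~~ P j -> m j = 0%N) -> (mrestrict p)@_m = p@_m.
Proof.
move=> suppP; rewrite /mrestrict -big_filter mcoeff_sumX ?filter_uniq ?msupp_uniq //.
rewrite mem_filter; case: ifPn => [//|]; rewrite negb_and => /orP[|/memN_msupp_eq0 //].
by case/forallPn=> j; rewrite negb_imply => /andP[/suppP ->].
Qed.

Lemma mcoeff_eq0_vanishing_subtorus p (m : 'X_{1..N}) :
  (forall x, (forall j, ~~ P j -> x j = 0) -> (forall j, P j -> x j != 0) ->
     p.@[x] = 0) ->
  (forall j, ~~ P j -> m j = 0%N) -> p@_m = 0.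
Proof.
move=> p0 suppP; rewrite -mcoeff_mrestrict // (mpoly_eq0_on_torus (p := mrestrict p)) ?mcoeff0 //.
by move=> x x0; rewrite meval_mrestrict p0 // => j; [move/negbTE -> | move=> ->].
Qed.

End TorusVanishing.

Lemma mcoeff_eq0_zero_on_U (K : numDomainType) n (w : 'I_n.+1 -> nat) alpha Lam
    (G : {mpoly K[n.+1]}) (m : 'X_{1..n.+1}) j0 :
  zero_on_U w alpha Lam G -> m j0 != 0%N ->
  (forall j, m j != 0%N -> (j \in Cset w alpha) && (j \notin Lam)) -> G@_m = 0.
Proof.
move=> G0 mj0 suppm.
apply: (mcoeff_eq0_vanishing_subtorus
  (P := fun j => (j \in Cset w alpha) && (j \notin Lam))) => [x x0 x_neq0 | j].
  apply: G0; split.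
  - by exists j0; apply: x_neq0; exact: suppm.
  - by move=> j jC; apply: x0; rewrite (negbTE jC).
  - by move=> j jL; apply: x0; rewrite jL andbF.
  - by move=> j jC jL; apply: x_neq0; rewrite jC jL.
by apply: contraNeq; exact: suppm.
Qed.

Section WeightedFloor.
Variables (R : archiRealDomainType) (I : finType) (x : I -> R) (c : I -> nat).

Lemma sum_floor_le :
  \sum_i Num.floor (x i) * (c i)%:Z <= Num.floor (\sum_i x i * (c i)%:R).
Proof.
rewrite floor_ge_int rmorph_sum /=; apply: ler_sum => i _.
by rewrite rmorphM /=; apply: ler_wpM2r; [exact: ler0n | exact: floor_le].
Qed.

Lemma sum_floor_eq_int :
  \sum_i x i * (c i)%:R \is a Num.int ->
  \sum_i Num.floor (x i) * (c i)%:Z = Num.floor (\sum_i x i * (c i)%:R) ->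
  forall i, c i != 0%N -> x i \is a Num.int.
Proof.
move=> /floorK sum_int /(congr1 (intr : int -> R)); rewrite sum_int rmorph_sum /= => /eqP.
rewrite eq_sym -subr_eq0 -sumrB => /eqP gap0 i ci.
have gap_ge0 j : true -> 0 <= x j * (c j)%:R - (Num.floor (x j) * (c j)%:Z)%:~R.
  by rewrite rmorphM /= -mulrBl mulr_ge0 ?subr_ge0 ?floor_le.
have /eqP := psumr_eq0P gap_ge0 gap0 (i := i) isT.
rewrite rmorphM /= -mulrBl mulf_eq0 pnatr_eq0 (negbTE ci) orbF subr_eq0 eq_sym.
by rewrite -intrEfloor.
Qed.

End WeightedFloor.

Section YExponentBound.
Variables (K : numDomainType) (n : nat) (w : 'I_n.+1 -> nat) (b : 'I_(n - 3) -> nat).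
Variables (F : 'I_(n - 3) -> {mpoly K[n.+1]}) (k : 'I_(n - 3)) (mon : 'X_{1..n.+1}).
Hypotheses (b_gt0 : (0 < b k)%N) (F_qhomog : qhomog w (b k) (F k)).
Hypothesis mon_supp : mon \in msupp (F k).

Lemma weighted_deg_mon (alpha : rat) :
  \sum_j alpha * (w j)%:R * (mon j)%:R = alpha * (b k)%:R.
Proof.
rewrite -(F_qhomog mon_supp) natr_sum mulr_sumr.
by apply: eq_bigr => j _; rewrite natrM mulrA.
Qed.

Lemma sum_floor_weights_le (alpha : rat) :
  \sum_j Num.floor (alpha * (w j)%:R) * (mon j)%:Z <= Num.floor (alpha * (b k)%:R).
Proof. by rewrite -weighted_deg_mon; exact: sum_floor_le. Qed.

Lemma exists_mon_neq0 : exists j, mon j != 0%N.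
Proof.
apply/existsP; apply: contraLR b_gt0 => /existsPn mon0.
rewrite -(F_qhomog mon_supp) big1 // => j _.
by move/negPn/eqP: (mon0 j) ->; rewrite muln0.
Qed.

Lemma sum_floor_weights_lt (alpha : rat) Lam :
  in_Gamma w b F alpha Lam k -> (forall j, j \in Lam -> mon j = 0%N) ->
  \sum_j Num.floor (alpha * (w j)%:R) * (mon j)%:Z < Num.floor (alpha * (b k)%:R).
Proof.
rewrite /in_Gamma => /andP[bk_int]; case: excluded_middle_informative => // F0 _ mon_Lam.
rewrite lt_neqAle sum_floor_weights_le andbT; apply/negP => /eqP eq_floor.
have w_int := sum_floor_eq_int (x := fun j => alpha * (w j)%:R) (c := mon).
rewrite weighted_deg_mon in w_int.
have [j0 mon_j0] := exists_mon_neq0.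
move: mon_supp; rewrite mcoeff_msupp (mcoeff_eq0_zero_on_U F0 mon_j0) ?eqxx // => j mon_j.
rewrite inE (w_int bk_int eq_floor j mon_j) /=.
by apply: contraNN mon_j => /mon_Lam ->.
Qed.

Lemma bcoef_sub_acoef_ge0 s :
  0 <= bcoef w b F s k - \sum_j acoef w s j * (mon j)%:Z.
Proof.
case: s => [alpha | alpha Lam] /=; first by rewrite subr_ge0 sum_floor_weights_le.
pose L := \sum_j (j \in Lam)%:Z * (mon j)%:Z.
have L_ge0 : 0 <= L by apply: sumr_ge0 => j _; apply: mulr_ge0.
rewrite (eq_bigr _ (fun j _ => mulrBl _ _ _)) sumrB -/L.
have := sum_floor_weights_le alpha.
set S := \sum_j _ * _; set B := Num.floor _.
case Gamma: (in_Gamma w b F alpha Lam k) => /=; last by lia.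
have [L_gt0 | L_le0] := ltP 0 L; first by lia.
suff mon_Lam j : j \in Lam -> mon j = 0%N by have := sum_floor_weights_lt Gamma mon_Lam; lia.
have L_terms_ge0 i : true -> 0 <= (i \in Lam)%:Z * (mon i)%:Z by move=> _; apply: mulr_ge0.
have L0 : L = 0 by apply/eqP; rewrite eq_le L_le0 L_ge0.
move=> jLam; have /eqP := psumr_eq0P L_terms_ge0 L0 (i := j) isT.
by rewrite jLam mul1r => /eqP [].
Qed.

End YExponentBound.

Lemma split_lshift p q (j : 'I_p) : split (lshift q j) = inl j.
Proof. exact: (unsplitK (inl _ j)). Qed.

Lemma split_rshift p q (i : 'I_q) : split (rshift p i) = inr i.
Proof. exact: (unsplitK (inr _ i)). Qed.

Section YHomogenization.
Variables (K : nzRingType) (n m : nat).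
Implicit Types (mon : 'X_{1..n.+1}) (M : 'X_{1..n.+1 + m}).
Implicit Types (p : {mpoly K[n.+1]}) (P Q : {mpoly K[n.+1 + m]}).

Definition xpart M : 'X_{1..n.+1} := [multinom M (lshift m j) | j < n.+1].

Lemma set_y1X M : 'X_[M] \mPo set_y1 n m K = 'X_[xpart M].
Proof.
rewrite comp_mpolyX big_split_ord /= [X in _ * X]big1 ?mulr1 => [|i _]; last first.
  by rewrite tnth_mktuple split_rshift expr1n.
rewrite [RHS]mpolyXE_id; apply: eq_bigr => j _.
by rewrite tnth_mktuple split_lshift mnmE.
Qed.

Lemma comp_set_y1E P :
  P \mPo set_y1 n m K = \sum_(M <- msupp P) P@_M *: 'X_[xpart M].
Proof. by rewrite comp_mpolyEX; apply: eq_bigr => M _; rewrite set_y1X. Qed.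

Variables (A : 'I_m -> 'I_n.+1 -> int) (d : 'I_m -> int).

Definition ybalanced M := forall i,
  \sum_j A i j * (M (lshift m j))%:Z + (M (rshift n.+1 i))%:Z = d i.

Lemma xpart_inj_ybalanced M1 M2 :
  ybalanced M1 -> ybalanced M2 -> xpart M1 = xpart M2 -> M1 = M2.
Proof.
move=> bal1 bal2 eq_x.
have eq_l j : M1 (lshift m j) = M2 (lshift m j).
  by have := congr1 (fun M0 : 'X_{1..n.+1} => M0 j) eq_x; rewrite /= !mnmE.
apply/mnmP => t; rewrite -(splitK t); case: (split t) => [j | i] //=.
have := bal1 i; rewrite -(bal2 i); under eq_bigr => j _ do rewrite eq_l.
by move/addrI => [].
Qed.

Lemma mcoeff_comp_set_y1 P M : {in msupp P, forall M', ybalanced M'} ->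
  ybalanced M -> (P \mPo set_y1 n m K)@_(xpart M) = P@_M.
Proof.
move=> P_bal M_bal; rewrite comp_set_y1E [in RHS](mpolyE P) !raddf_sum /=.
apply: eq_big_seq => M' M'_P; rewrite !mcoeffZ !mcoeffX.
suff -> : (xpart M' == xpart M) = (M' == M) by [].
apply/eqP/eqP => [eq_x | -> //].
exact: xpart_inj_ybalanced (P_bal _ M'_P) M_bal eq_x.
Qed.

Lemma set_y1_inj_ybalanced P Q :
  {in msupp P, forall M, ybalanced M} -> {in msupp Q, forall M, ybalanced M} ->
  P \mPo set_y1 n m K = Q \mPo set_y1 n m K -> P = Q.
Proof.
move=> P_bal Q_bal PQ.
suff coefE M : ybalanced M -> P@_M = Q@_M.
  apply/mpolyP => M; have [/P_bal/coefE // | MP] := boolP (M \in msupp P).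
  have [/Q_bal/coefE // | MQ] := boolP (M \in msupp Q).
  by rewrite !memN_msupp_eq0.
by move=> M_bal; rewrite -(mcoeff_comp_set_y1 P_bal M_bal) PQ mcoeff_comp_set_y1.
Qed.

Definition yexp mon i : int := d i - \sum_j A i j * (mon j)%:Z.

(* The absolute value is harmless: ylift is only used where yexp is nonnegative. *)
Definition ylift mon : 'X_{1..n.+1 + m} :=
  [multinom match split t with inl j => mon j | inr i => `|yexp mon i|%N end
  | t < n.+1 + m].

Lemma ylift_lshift mon j : ylift mon (lshift m j) = mon j.
Proof. by rewrite mnmE split_lshift. Qed.

Lemma ylift_rshift mon i : ylift mon (rshift n.+1 i) = `|yexp mon i|%N.
Proof. by rewrite mnmE split_rshift. Qed.

Lemma xpart_ylift : cancel ylift xpart.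
Proof. by move=> mon; apply/mnmP => j; rewrite mnmE ylift_lshift. Qed.

Lemma ybalanced_ylift mon : (forall i, 0 <= yexp mon i) -> ybalanced (ylift mon).
Proof.
move=> yexp_ge0 i; rewrite ylift_rshift gez0_abs //.
rewrite (eq_bigr (fun j => A i j * (mon j)%:Z)) => [|j _]; last by rewrite ylift_lshift.
by rewrite addrC subrK.
Qed.

Definition yhomog p : {mpoly K[n.+1 + m]} :=
  \sum_(mon <- msupp p) p@_mon *: 'X_[ylift mon].

Lemma yhomog_set_y1 p : yhomog p \mPo set_y1 n m K = p.
Proof.
rewrite raddf_sum [RHS]mpolyE; apply: eq_bigr => mon _ /=.
by rewrite comp_mpolyZ set_y1X xpart_ylift.
Qed.

Lemma msupp_yhomog p M :
  M \in msupp (yhomog p) -> exists2 mon, mon \in msupp p & M = ylift mon.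
Proof.
move/msupp_sum_le/flatten_mapP => [mon]; rewrite mem_filter => mon_p.
by move/msuppZ_le; rewrite msuppX mem_seq1 => /eqP ->; exists mon.
Qed.

Lemma mqhomog_yhomog w (d0 : nat) p : qhomog w d0 p ->
  {in msupp p, forall mon i, 0 <= yexp mon i} -> mqhomog w A d0%:Z d (yhomog p).
Proof.
move=> p_qhomog p_yexp M /msupp_yhomog[mon mon_p ->].
split; last exact: ybalanced_ylift (p_yexp _ mon_p).
rewrite -(p_qhomog _ mon_p) -natz natr_sum; apply: eq_bigr => j _.
by rewrite ylift_lshift natrM !natz.
Qed.

Theorem ylift_exists_unique w (d0 : nat) p : qhomog w d0 p ->
  {in msupp p, forall mon i, 0 <= yexp mon i} ->
  exists! P, mqhomog w A d0%:Z d P /\ P \mPo set_y1 n m K = p.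
Proof.
move=> p_qhomog p_yexp; exists (yhomog p).
split=> [|P [P_mq P_comp]]; first by split; [exact: mqhomog_yhomog | exact: yhomog_set_y1].
apply: set_y1_inj_ybalanced; last by rewrite yhomog_set_y1 P_comp.
- by move=> M /(mqhomog_yhomog p_qhomog p_yexp) [].
- by move=> M /P_mq [].
Qed.

End YHomogenization.

Unset Implicit Arguments.

Theorem lemma3p8 (R : rcfType) (n m : nat)
    (w : 'I_n.+1 -> nat) (b : 'I_(n - 3) -> nat)
    (F : 'I_(n - 3) -> {mpoly R[i][n.+1]})
    (phi : 'I_m -> sector n) :
  (forall j, (0 < w j)%N) ->
  \big[gcdn/0%N]_j w j = 1%N ->
  (forall k, (0 < b k)%N) ->
  (\sum_k b k = \sum_j w j)%N ->
  (forall k, qhomog w (b k) (F k)) ->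
  (forall i, let alpha := sec_alpha (phi i) in
     [/\ 0 < alpha, alpha < 1 & age w b alpha = 1]) ->
  (forall i alpha Lam, phi i = Sec2 alpha Lam ->
     Lam \subset Cset w alpha /\
     exists x : 'I_n.+1 -> R[i], in_U w alpha Lam x /\ forall k, (F k).@[x] = 0) ->
  forall k : 'I_(n - 3),
    exists! Ft : {mpoly R[i][n.+1 + m]},
      mqhomog w (fun i => acoef w (phi i)) (b k)%:Z
              (fun i => bcoef w b F (phi i) k) Ft /\
      Ft \mPo (set_y1 n m R[i]) = F k.
Proof.
(* Only the positivity of the b_k and the quasi-homogeneity of the F_k matter. *)
move=> _ _ b_gt0 _ F_qhomog _ _ k.
apply: ylift_exists_unique (F_qhomog k) _ => mon mon_F i.
exact: bcoef_sub_acoef_ge0 (b_gt0 k) (F_qhomog k) mon_F _.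
Qed.
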